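(* Let $k$ be a positive integer. If $H$ is a thickened $4k$-path, then $\mathrm{ecrw}(H)\ge k$.
   Context: A thickened $n$-path is the graph obtained from the path on $n$ vertices by replacing each edge by $n$ internally vertex-disjoint paths of length two; explicitly, vertices $u_1,\dots,u_n$ and $v_{i,j}$ ($i\in[n-1]$, $j\in[n]$), with edges $u_iv_{i,j}$ and $u_{i+1}v_{i,j}$. A tree-cut decomposition of a graph $G$ is a pair $\mathcal{T}=(T,\{X_t\}_{t\in V(T)})$ where $T$ is a tree and the bags $X_t\subseteq V(G)$ are pairwise disjoint (possibly empty) with $\bigcup_{t\in V(T)}X_t=V(G)$. For a node $t$ of $T$, let $T_1,\dots,T_m$ be the connected components of $T-t$ and $Z_i=\bigcup_{s\in V(T_i)}X_s$; $\mathrm{cross}_{\mathcal{T}}(t)$ is the number of edges of $G$ whose two endpoints lie in two distinct sets among $Z_1,\dots,Z_m$ (if $T$ has one node, $\mathrm{cross}_{\mathcal T}(t)=0$). The crossing number of $\mathcal{T}$ is $\max_{t}\mathrm{cross}_{\mathcal{T}}(t)$, and the thickness of $\mathcal{T}$ is $\max_t|X_t|$. The edge-crossing width of $\mathcal T$ is the maximum of its crossing number and its thickness, and $\mathrm{ecrw}(G)$ is the minimum edge-crossing width over all tree-cut decompositions of $G$. *)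

From mathcomp Require Import all_boot.
From mathcomp Require Import boolp.

Set Implicit Arguments.
Unset Strict Implicit.
Unset Printing Implicit Defensive.

(* A simple graph is given by a vertex finType V and a symmetric
   irreflexive adjacency relation e : rel V. *)

(* Vertices: inl a  = u_{a+1}  (a < n),
             inr (b, j) = v_{b+1, j+1}  (b < n-1, j < n).
   Edges: u_i v_{i,j} and u_{i+1} v_{i,j}. *)
Definition tp_vertex (n : nat) : finType := ('I_n + ('I_n.-1 * 'I_n))%type.

Definition tp_uv n (a : 'I_n) (bj : 'I_n.-1 * 'I_n) : bool :=
  (nat_of_ord a == nat_of_ord bj.1) || (nat_of_ord a == (nat_of_ord bj.1).+1).

Definition thickened_path_adj (n : nat) : rel (tp_vertex n) :=
  fun x y =>
    match x, y with
    | inl a, inr bj => tp_uv a bj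
    | inr bj, inl a => tp_uv a bj
    | _, _ => false
    end.

Arguments thickened_path_adj n : clear implicits.

Definition acyclic (T : finType) (r : rel T) : Prop :=
  forall (x : T) (p : seq T),
    path r x p -> uniq (x :: p) -> 2 <= size p -> ~~ r (last x p) x.

Definition is_tree (T : finType) (r : rel T) : Prop :=
  [/\ 0 < #|T|, irreflexive r, symmetric r,
      (forall a b : T, connect r a b) & acyclic r].

Record tcd (V : finType) := TCD {
  tnode : finType;
  tadj  : rel tnode;
  bag   : tnode -> {set V} }.

Definition tcd_valid (V : finType) (D : tcd V) : Prop :=
  [/\ is_tree (@tadj V D),
      (forall s1 s2 : tnode D, s1 != s2 -> [disjoint bag s1 & bag s2]) &
      \bigcup_(s : tnode D) bag s = [set: V]].

Definition tadj_minus (V : finType) (D : tcd V) (t : tnode D) : rel (tnode D) :=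
  fun a b => [&& tadj a b, a != t & b != t].

(* x and y lie in two distinct sets among Z_1, ..., Z_m, where the Z_i are
   the unions of the bags over the components of T - t. *)
Definition separated (V : finType) (D : tcd V) (t : tnode D) (x y : V) : bool :=
  [exists s1 : tnode D, exists s2 : tnode D,
     [&& s1 != t, s2 != t, x \in bag s1, y \in bag s2
       & ~~ connect (tadj_minus t) s1 s2]].

(* cross_T(t): number of edges of G (unordered pairs {x,y} with e x y)
   whose endpoints lie in two distinct Z_i's. *)
Definition cross (V : finType) (e : rel V) (D : tcd V) (t : tnode D) : nat :=
  #|[set E : {set V} | [exists x : V, exists y : V,
        [&& e x y, E == [set x; y] & separated t x y]]]|.

Definition crossing_number (V : finType) (e : rel V) (D : tcd V) : nat :=
  \max_(t : tnode D) cross e t.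

Definition thickness (V : finType) (D : tcd V) : nat :=
  \max_(t : tnode D) #|bag t|.

Definition ecr_width (V : finType) (e : rel V) (D : tcd V) : nat :=
  maxn (crossing_number e D) (thickness D).

Definition achievable_width (V : finType) (e : rel V) : pred nat :=
  fun m => `[< exists D : tcd V, tcd_valid D /\ ecr_width e D = m >].

Definition trivial_tcd (V : finType) : tcd V :=
  @TCD V unit (fun _ _ => false) (fun _ => [set: V]).

Lemma trivial_tcd_valid (V : finType) : tcd_valid (trivial_tcd V).
Proof.
split.
- split; rewrite ?card_unit //;
    try (by move=> [] []); try (by move=> x [|y p]);
    try (by move=> [] []; apply: connect0).
- by move=> [] [] /eqP.
- apply/setP=> v; rewrite in_setT; apply/bigcupP; by exists tt.
Qed.

Lemma achievable_width_ex (V : finType) (e : rel V) :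
  exists m, achievable_width e m.
Proof.
exists (ecr_width e (trivial_tcd V)); apply/asboolP.
by exists (trivial_tcd V); split => //; apply: trivial_tcd_valid.
Qed.

Definition ecrw (V : finType) (e : rel V) : nat :=
  ex_minn (achievable_width_ex e).

From mathcomp Require Import all_boot.
From mathcomp Require Import zify boolp.

Set Implicit Arguments.
Unset Strict Implicit.
Unset Printing Implicit Defensive.

(* Let D be a tree-cut decomposition of a graph of width w.  The heart of
   the argument is a bound on common neighbourhoods: if x and y lie in the
   bags of two distinct nodes s1, s2, then x and y have at most 4w common
   neighbours.  Indeed, either s1 and s2 are adjacent in the tree, and every
   common neighbour z lies in bag s1 or bag s2, or one of the edges xz, zy
   is crossing at s2 or at s1; or some node t separates s1 from s2, and z
   lies in bag t or one of xz, zy is crossing at t.  Each class has at most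
   w members (thickness, resp. crossing number).

   In the thickened n-path, consecutive vertices u_a and u_(a+1) have n
   common neighbours.  So if 4w < n, all of u_1, ..., u_n lie in one bag,
   whose size n then exceeds w.  Hence n <= 4w for every decomposition;
   with n = 4k this gives k <= ecrw(H). *)

Lemma leq_cardsU (T : finType) (A B : {set T}) : #|A :|: B| <= #|A| + #|B|.
Proof. by rewrite -cardsUI leq_addr. Qed.

Section TreeSeparation.
Variables (V : finType) (D : tcd V).
Hypothesis tadj_sym : symmetric (@tadj V D).
Hypothesis tadj_acyclic : acyclic (@tadj V D).
Local Notation r := (@tadj V D).
Local Notation rm := (@tadj_minus V D).

Lemma tadj_minus_sym t : symmetric (rm t).
Proof.
by move=> a b; rewrite /tadj_minus tadj_sym; case: (a != t); case: (b != t).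
Qed.

Lemma tadj_minus_notin t x p : path (rm t) x p -> t \notin p.
Proof.
elim: p x => [//|y p IH] x /= /andP[/and3P[_ _ yt] /IH].
by rewrite inE eq_sym (negbTE yt).
Qed.

Lemma tadj_minus_path t x p : path (rm t) x p -> path r x p.
Proof. by apply: sub_path => a b /and3P[]. Qed.

(* A walk x, y, ..., z avoiding x, with y != z, cannot be closed by an edge
   z x: shortening it would produce a cycle of length at least 3. *)
Lemma no_closing_edge x z y p : path r x (y :: p) -> x \notin y :: p ->
  last x (y :: p) = z -> r z x -> y != z -> False.
Proof.
move=> /= /andP[rxy py] xn hl rzx yz.
case: (shortenP py) hl => p' pp' up' sp' hl.
have ux : uniq (x :: y :: p').
  rewrite cons_uniq up' andbT inE negb_or.
  move: xn; rewrite inE negb_or => /andP[-> xp] /=.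
  by apply/negP => /sp'; apply/negP.
have sz : 2 <= size (y :: p').
  case: p' {pp' up' sp' ux} hl => [|w p''] //= hl.
  by move: yz; rewrite hl eqxx.
have pth : path r x (y :: p') by rewrite /= rxy pp'.
by move: (tadj_acyclic pth ux sz); rewrite /= hl rzx.
Qed.

Lemma inner_node_separates s1 y p s2 : path r s1 (y :: p) ->
  uniq (s1 :: y :: p) -> last s1 (y :: p) = s2 -> p != [::] ->
  ~~ connect (rm y) s1 s2.
Proof.
move=> pth un hl pn; apply/negP.
rewrite (sym_connect_sym (@tadj_minus_sym y)) => /connectP[q pq hq].
move: pth un hl => /= /andP[rs1y pyp] /andP[s1n /andP[yn _]] hl.
case: p pn pyp yn hl s1n => [//|y' p'] _ pyp yn hl s1n.
rewrite /= in hl.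
apply: (@no_closing_edge y s1 y' (p' ++ q)).
- by rewrite -cat_cons cat_path pyp /= hl (tadj_minus_path pq).
- by rewrite -cat_cons mem_cat negb_or yn (tadj_minus_notin pq).
- by rewrite -cat_cons last_cat /= hl.
- exact: rs1y.
- by apply/negP => /eqP ey; move: s1n; rewrite ey !inE eqxx orbT.
Qed.

Lemma tree_separator s1 s2 : connect r s1 s2 -> s1 != s2 ->
  r s1 s2 \/ exists t, [/\ t != s1, t != s2 & ~~ connect (rm t) s1 s2].
Proof.
move=> /connectP[p pp hp] s12.
case: (shortenP pp) hp => p' pp' up' _ hp.
case: p' pp' up' hp => [|y q] pp' up' hp; first by move: s12; rewrite hp eqxx.
case: (eqVneq q [::]) => [qnil | qn].
  by left; move: pp' hp; rewrite qnil /= => /andP[? _] ->.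
right; exists y; split; last exact: inner_node_separates pp' up' (esym hp) qn.
- by apply: contraTneq up' => ->; rewrite /= inE eqxx.
- have /andP[_ /andP[yq _]] := up'.
  apply: contraNneq yq => ->; rewrite hp /=.
  by case: q {pp' up' hp} qn => // z q _ /=; apply: mem_last.
Qed.

(* For an edge s1 s2, any other node s is cut off from s2 by s1 or from s1
   by s2: being joined to both would close a cycle through s1 s2. *)
Lemma edge_separates s1 s2 s : r s1 s2 -> s != s1 -> s != s2 ->
  ~~ connect (rm s1) s s2 || ~~ connect (rm s2) s s1.
Proof.
move=> r12 ss1 ss2; rewrite -negb_and; apply/negP => /andP[].
rewrite (sym_connect_sym (@tadj_minus_sym s1)) => /connectP[q pq hq].
move=> /connectP[p pp hp].
case: (shortenP pq) hq => q' pq' uq' sq' hq.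
case: q' pq' uq' sq' hq => [|y q''] pq' uq' sq' hq.
  by move: ss2; rewrite hq eqxx.
apply: (@no_closing_edge s2 s1 y (q'' ++ p)).
- by rewrite -cat_cons cat_path (tadj_minus_path pq') -hq (tadj_minus_path pp).
- rewrite -cat_cons mem_cat negb_or (tadj_minus_notin pp) andbT.
  by case/andP: uq'.
- by rewrite -cat_cons last_cat -hq -hp.
- exact: r12.
- apply: contraTneq (tadj_minus_notin pq) => ey.
  by rewrite negbK -ey; apply: sq'; rewrite inE eqxx.
Qed.

End TreeSeparation.

Section CommonNeighbours.
Variables (V : finType) (e : rel V) (D : tcd V).
Hypothesis e_irr : irreflexive e.
Hypothesis D_valid : tcd_valid D.
Local Notation w := (ecr_width e D).
Local Notation rm := (@tadj_minus V D).

Definition is_crossing (t : tnode D) (E : {set V}) : bool :=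
  [exists x : V, exists y : V, [&& e x y, E == [set x; y] & separated t x y]].

Lemma bag_cover (x : V) : exists s : tnode D, x \in bag s.
Proof.
case: D_valid => _ _ cov.
have : x \in \bigcup_(s : tnode D) bag s by rewrite cov inE.
by case/bigcupP => s _ xs; exists s.
Qed.

Lemma bag_le_width (t : tnode D) : #|bag t| <= w.
Proof.
apply: leq_trans (leq_maxr _ _).
exact: (@leq_bigmax _ (fun s => #|bag s|) t).
Qed.

Lemma crossing_edge (t a b : tnode D) (x y : V) : a != t -> b != t -> x \in bag a ->
  y \in bag b -> ~~ connect (rm t) a b -> e x y ->
  is_crossing t [set x; y].
Proof.
move=> a_t b_t xa yb ab exy; apply/existsP; exists x.
apply/existsP; exists y; rewrite exy eqxx /=.
by apply/existsP; exists a; apply/existsP; exists b; rewrite a_t b_t xa yb ab.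
Qed.

Lemma star_le_width (t : tnode D) (x : V) (A : {set V}) : x \notin A ->
  #|[set z in A | is_crossing t [set x; z]]| <= w.
Proof.
move=> xA; apply: leq_trans (leq_maxl _ _).
apply: leq_trans (@leq_bigmax _ (fun s => cross e s) t).
rewrite -(@card_in_imset _ _ (fun z => [set x; z])).
  apply: subset_leq_card; apply/subsetP => E /imsetP[z].
  by rewrite inE => /andP[_ zE] ->; rewrite inE.
move=> z z'; rewrite !inE => /andP[zA _] _ exz.
have : z \in [set x; z'] by rewrite -exz !inE eqxx orbT.
rewrite !inE => /orP[/eqP zx | /eqP //].
by move: zA xA; rewrite zx => ->.
Qed.

Lemma bagI_le_width (t : tnode D) (A : {set V}) : #|A :&: bag t| <= w.
Proof. exact: leq_trans (subset_leq_card (subsetIr _ _)) (bag_le_width t). Qed.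

Section Neighbourhood.
Variables (x y : V) (s1 s2 : tnode D) (Z : {set V}).
Hypotheses (s12 : s1 != s2) (xs1 : x \in bag s1) (ys2 : y \in bag s2).
Hypothesis Z_common : {in Z, forall z, e x z && e z y}.

Let xZ : x \notin Z.
Proof. by apply/negP => /Z_common; rewrite e_irr. Qed.

Let yZ : y \notin Z.
Proof. by apply/negP => /Z_common; rewrite e_irr andbF. Qed.

Let tadj_sym : symmetric (@tadj V D).
Proof. by case: D_valid => [[]]. Qed.

(* If t separates s1 from s2, then every z in Z lies in bag t or one of
   its edges to x and y crosses at t. *)
Lemma separated_neighbours_le (t : tnode D) : t != s1 -> t != s2 ->
  ~~ connect (rm t) s1 s2 -> #|Z| <= 3 * w.
Proof.
move=> ts1 ts2 sep.
have cover : Z \subset (Z :&: bag t) :|: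
    [set z in Z | is_crossing t [set x; z]] :|:
    [set z in Z | is_crossing t [set y; z]].
  apply/subsetP => z zZ; have /andP[exz ezy] := Z_common zZ.
  have [s zs] := bag_cover z; rewrite !inE zZ /=.
  case: (eqVneq s t) => [<- | st]; first by rewrite zs.
  case c1 : (connect (rm t) s1 s).
    have sep2 : ~~ connect (rm t) s s2 by apply: contra sep; apply: connect_trans.
    by rewrite [[set y; z]]setUC (crossing_edge st _ zs ys2) ?orbT // eq_sym.
  by rewrite (crossing_edge _ st xs1 zs) ?c1 ?orbT // eq_sym.
apply: leq_trans (subset_leq_card cover) _.
apply: leq_trans (leq_cardsU _ _) _; rewrite mulSn mulSn mul1n addnA.
apply: leq_add (star_le_width _ yZ).
by apply: leq_trans (leq_cardsU _ _) (leq_add (bagI_le_width _ _) (star_le_width _ xZ)).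
Qed.

(* If s1 and s2 are adjacent, every z in Z lies in bag s1 or bag s2, or one
   of its edges crosses at s1 or at s2. *)
Lemma adjacent_neighbours_le : tadj s1 s2 -> #|Z| <= 4 * w.
Proof.
move=> r12; case: D_valid => [[_ _ _ _ acyc] _ _].
have cover : Z \subset (Z :&: bag s1) :|: (Z :&: bag s2) :|:
    [set z in Z | is_crossing s1 [set y; z]] :|:
    [set z in Z | is_crossing s2 [set x; z]].
  apply/subsetP => z zZ; have /andP[exz ezy] := Z_common zZ.
  have [s zs] := bag_cover z; rewrite !inE zZ /=.
  case: (eqVneq s s1) => [<- | ss1]; first by rewrite zs.
  case: (eqVneq s s2) => [<- | ss2]; first by rewrite zs orbT.
  case/orP: (edge_separates tadj_sym acyc r12 ss1 ss2) => [c1 | c2].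
    by rewrite [[set y; z]]setUC (crossing_edge ss1 _ zs ys2) ?orbT // eq_sym.
  have c2' : ~~ connect (rm s2) s1 s.
    by rewrite (sym_connect_sym (tadj_minus_sym tadj_sym s2)).
  by rewrite (crossing_edge _ ss2 xs1 zs) ?orbT // eq_sym.
apply: leq_trans (subset_leq_card cover) _.
rewrite !mulSn mul0n addn0 !addnA.
apply: leq_trans (leq_cardsU _ _) _; apply: leq_add (star_le_width _ xZ).
apply: leq_trans (leq_cardsU _ _) _; apply: leq_add (star_le_width _ yZ).
by apply: leq_trans (leq_cardsU _ _) (leq_add (bagI_le_width _ _) (bagI_le_width _ _)).
Qed.

Lemma common_neighbours_le : #|Z| <= 4 * w.
Proof.
case: D_valid => [[_ _ _ conn acyc] _ _].
case: (tree_separator tadj_sym acyc (conn s1 s2) s12) => [r12 | [t [ts1 ts2 sep]]].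
  exact: adjacent_neighbours_le.
apply: leq_trans (separated_neighbours_le ts1 ts2 sep) _.
by rewrite leq_mul2r orbT.
Qed.

End Neighbourhood.
End CommonNeighbours.

Lemma ecrw_attained (V : finType) (e : rel V) :
  exists2 D : tcd V, tcd_valid D & ecr_width e D = ecrw e.
Proof.
rewrite /ecrw; case: ex_minnP => m /asboolP[D [hD <-]] _.
by exists D.
Qed.

Section ThickenedPath.
Variable n : nat.
Local Notation H := (thickened_path_adj n).

Lemma thickened_path_irreflexive : irreflexive H.
Proof. by case. Qed.

Lemma thickened_path_common_neighbours (a b : 'I_n) : b = a.+1 :> nat ->
  exists2 Z : {set tp_vertex n}, #|Z| = n &
    {in Z, forall z, H (inl a) z && H z (inl b)}.
Proof.
move=> ba; have ha : a < n.-1 by move: (ltn_ord b); rewrite ba; lia.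
exists [set (inr (Ordinal ha, j) : tp_vertex n) | j : 'I_n].
  by rewrite card_imset ?card_ord // => j j' [].
by move=> _ /imsetP[j _ ->]; rewrite /= /tp_uv /= ba !eqxx orbT.
Qed.

(* Every tree-cut decomposition of the thickened n-path has n <= 4 w:
   otherwise consecutive u-vertices, having n common neighbours, share a
   bag, so one bag contains all n of them. *)
Lemma thickened_path_width (D : tcd (tp_vertex n)) :
  tcd_valid D -> n <= 4 * ecr_width H D.
Proof.
move=> hD; rewrite leqNgt; apply/negP => small.
have n_pos : 0 < n by apply: leq_ltn_trans small.
have [s0 u0s0] := bag_cover hD (inl (Ordinal n_pos)).
have path_in_s0 (a : 'I_n) : (inl a : tp_vertex n) \in bag s0.
  case: a => a; elim: a => [|a IH] ha.
    by rewrite (_ : Ordinal ha = Ordinal n_pos) //; apply: val_inj.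
  have [s us] := bag_cover hD (inl (Ordinal ha)).
  case: (eqVneq s0 s) => [-> // | ne].
  have [Z cardZ common] := @thickened_path_common_neighbours (Ordinal (ltnW ha)) (Ordinal ha) erefl.
  have := common_neighbours_le thickened_path_irreflexive hD ne (IH (ltnW ha)) us common.
  by rewrite cardZ leqNgt small.
have : #|[set (inl a : tp_vertex n) | a : 'I_n]| <= #|bag s0|.
  by apply: subset_leq_card; apply/subsetP => _ /imsetP[a _ ->].
rewrite card_imset ?card_ord => [n_le_bag | ? ? []//].
by move: (leq_trans n_le_bag (bag_le_width H s0)) small; lia.
Qed.
End ThickenedPath.

Theorem lemma3p14 (k : nat) :
  0 < k -> k <= ecrw (thickened_path_adj (4 * k)).
Proof.
move=> _; have [D hD <-] := ecrw_attained (thickened_path_adj (4 * k)).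
by rewrite -(@leq_pmul2l 4) // thickened_path_width.
Qed.
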